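(* Suppose $f:\{0,1\}^n\to\mathbb{R}$ is submodular and $f(0)>0$. Then there are at least $2^{n-1}$ points $x\in\{0,1\}^n$ such that $f(x)\neq 0$.
   Context: $f$ is submodular if $f(x+\mathbf{e}_i)-f(x)\ge f(y+\mathbf{e}_i)-f(y)$ for all $i$ and all $x\le y$ (coordinatewise) with $x_i=y_i=0$, where $\mathbf{e}_i$ is the $i$-th standard basis vector. *)

From mathcomp Require Import all_boot all_order all_algebra.
Set Implicit Arguments. Unset Strict Implicit. Unset Printing Implicit Defensive.
Import Order.TTheory GRing.Theory Num.Theory.
Local Open Scope ring_scope.

Definition cube (n : nat) := {ffun 'I_n -> bool}.

Definition cube0 (n : nat) : cube n := [ffun => false].

(* x + e_i for x with x_i = 0: set coordinate i to 1. *)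
Definition cube_add (n : nat) (x : cube n) (i : 'I_n) : cube n :=
  [ffun j => if j == i then true else x j].

Definition cube_le (n : nat) (x y : cube n) : Prop :=
  forall j : 'I_n, x j ==> y j.

Definition submodular (R : realFieldType) (n : nat) (f : cube n -> R) : Prop :=
  forall (i : 'I_n) (x y : cube n),
    cube_le x y -> x i = false -> y i = false ->
    f (cube_add x i) - f x >= f (cube_add y i) - f y.

From mathcomp Require Import all_boot all_order all_algebra.
Import Order.TTheory GRing.Theory Num.Theory.
Local Open Scope ring_scope.
Set Implicit Arguments. Unset Strict Implicit.

(** The nonzero points are counted on subcubes, i.e. sets of points agreeing
    with a base point [a] outside a set [S] of free coordinates, with [a]
    vanishing on [S]; we show that such a subcube with [f a > 0] has at least
    [2 ^ (#|S| - 1)] nonzero points, by induction on [S]. Split the subcube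
    along a free coordinate [i] into the lower half (base [a]) and the upper
    half (base [a + e_i]). If [f (a + e_i) > 0], both halves contribute by
    induction. Otherwise [f (a + e_i) - f a < 0], so by submodularity
    [f (x + e_i) <> f x] for every [x] of the lower half: in each pair
    [{x, x + e_i}] some point is nonzero, which gives [2 ^ (#|S| - 1)] nonzero
    points at once. *)

Lemma set_rem_ind (T : finType) (P : {set T} -> Prop) :
  P set0 -> (forall (S : {set T}) i, i \in S -> P (S :\ i) -> P S) ->
  forall S, P S.
Proof.
move=> P0 Pstep S; have [k] := ubnP #|S|; elim: k S => // k IH S ltSk.
have [->|[i iS]] := set_0Vmem S; first exact: P0.
apply: (Pstep _ _ iS) (IH _ _); by rewrite (cardsD1 i S) iS in ltSk.
Qed.

Lemma cardsU_disjoint (T : finType) (A B : {set T}) :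
  [disjoint A & B] -> #|A :|: B| = (#|A| + #|B|)%N.
Proof. by move=> dAB; rewrite cardsU (disjoint_setI0 dAB) cards0 subn0. Qed.

Lemma card_le_pairing (T : finType) (A B : {set T}) (h : T -> T) (P : pred T) :
  [disjoint A & B] -> {in A &, injective h} -> {in A, forall x, h x \in B} ->
  {in A, forall x, P x || P (h x)} ->
  (#|A| <= #|[set y in A :|: B | P y]|)%N.
Proof.
move=> dAB h_inj hAB hP; pose g x := if P x then x else h x.
have g_inj : {in A &, injective g}.
  move=> x y xA yA; rewrite /g.
  case Px: (P x); case Py: (P y) => // e; last exact: h_inj.
  - by move: (disjointFr dAB xA); rewrite e hAB.
  - by move: (disjointFr dAB yA); rewrite -e hAB.
rewrite -(card_in_imset g_inj); apply/subset_leq_card/subsetP.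
move=> _ /imsetP[x xA ->]; rewrite /g !inE.
case: ifP => Px; first by rewrite xA.
by rewrite hAB ?orbT //; move: (hP x xA); rewrite Px.
Qed.

Section Subcube.
Variable n : nat.
Implicit Types (a x y : cube n) (S : {set 'I_n}) (i j : 'I_n).

Lemma cube_addE x i j : cube_add x i j = (j == i) || x j.
Proof. by rewrite ffunE. Qed.

Lemma cube_add_inj x y i :
  x i = false -> y i = false -> cube_add x i = cube_add y i -> x = y.
Proof.
move=> xi yi /ffunP e; apply/ffunP=> j; move: (e j); rewrite !cube_addE.
by case: eqP => [->|//]; rewrite xi yi.
Qed.

Definition subcube a S : {set cube n} :=
  [set x : cube n | [forall j in ~: S, x j == a j]].

Lemma subcubeP a S x :
  reflect (forall j, j \notin S -> x j = a j) (x \in subcube a S).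
Proof.
rewrite inE; apply: (iffP forall_inP) => H j; rewrite ?inE => jS; apply/eqP.
  by apply: H; rewrite inE.
exact: H.
Qed.

Lemma subcubeT a : subcube a [set: 'I_n] = [set: cube n].
Proof.
by apply/setP=> x; rewrite in_setT; apply/subcubeP=> j; rewrite in_setT.
Qed.

Lemma subcube_le a S x :
  {in S, forall j, a j = false} -> x \in subcube a S -> cube_le a x.
Proof.
move=> aS /subcubeP xa j; case: (boolP (j \in S)) => [/aS -> //|/xa ->].
exact: implybb.
Qed.

Lemma subcube_split a S i : a i = false -> i \in S ->
  subcube a S = subcube a (S :\ i) :|: subcube (cube_add a i) (S :\ i).
Proof.
move=> ai iS; apply/setP=> x; rewrite in_setU.
apply/subcubeP/orP => [xa | [] /subcubeP xa j jS].
- case xi: (x i); [right|left]; apply/subcubeP=> j;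
    rewrite in_setD1 negb_and negbK ?cube_addE; case: eqP => [->|_ /= /xa //];
    by rewrite xi ?ai.
- by apply: xa; rewrite in_setD1 (negbTE jS) andbF.
- rewrite xa ?cube_addE ?in_setD1 ?(negbTE jS) ?andbF //.
  by case: eqP => [ji|//]; move: jS; rewrite ji iS.
Qed.

Lemma subcube_halves_disjoint a S i : a i = false ->
  [disjoint subcube a (S :\ i) & subcube (cube_add a i) (S :\ i)].
Proof.
move=> ai; rewrite -setI_eq0; apply/eqP/setP=> x; rewrite in_setI in_set0.
apply/negbTE/andP=> -[/subcubeP xa /subcubeP xa'].
have iS : i \notin S :\ i by rewrite setD11.
by move: (xa' i iS); rewrite xa // cube_addE eqxx ai.
Qed.

Lemma cube_add_subcube a S i x : x \in subcube a (S :\ i) ->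
  cube_add x i \in subcube (cube_add a i) (S :\ i).
Proof. by move/subcubeP=> xa; apply/subcubeP=> j jS; rewrite !cube_addE xa. Qed.

Lemma subcube_coord a S i x : i \notin S -> x \in subcube a S -> x i = a i.
Proof. by move=> iS /subcubeP; apply. Qed.

Lemma card_subcube a S :
  {in S, forall j, a j = false} -> #|subcube a S| = (2 ^ #|S|)%N.
Proof.
elim/set_rem_ind: S a => [|S i iS IH] a aS.
  rewrite cards0 expn0; apply/eqP/cards1P; exists a.
  apply/setP=> x; rewrite in_set1; apply/subcubeP/eqP => [xa|->//].
  by apply/ffunP=> j; apply: xa; rewrite in_set0.
have ai := aS i iS.
rewrite (subcube_split ai iS) cardsU_disjoint ?subcube_halves_disjoint //.
rewrite !IH ?(cardsD1 i S) ?iS ?expnS ?mul2n ?addnn // => j /setD1P[ji /aS] //.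
by rewrite cube_addE (negbTE ji).
Qed.

End Subcube.

Section Submodular.
Variables (R : realFieldType) (n : nat) (f : cube n -> R).
Hypothesis f_submod : submodular f.
Implicit Types (a x : cube n) (S : {set 'I_n}) (i : 'I_n).

Lemma submodular_increment_neq a x i :
  cube_le a x -> a i = false -> x i = false ->
  f (cube_add a i) < f a -> f (cube_add x i) != f x.
Proof.
move=> le_ax ai xi lt_a; rewrite -subr_eq0 lt_eqF //.
by apply: le_lt_trans (f_submod le_ax ai xi) _; rewrite subr_lt0.
Qed.

Lemma subcube_nonzeros a S : {in S, forall j, a j = false} -> 0 < f a ->
  (2 ^ #|S|.-1 <= #|[set x in subcube a S | f x != 0%R]|)%N.
Proof.
elim/set_rem_ind: S a => [|S i iS IH] a aS fa_gt0.
  rewrite cards0 card_gt0; apply/set0Pn; exists a.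
  by rewrite inE gt_eqF // andbT; apply/subcubeP.
have ai := aS i iS.
have aS' : {in S :\ i, forall j, a j = false} by move=> j /setD1P[_ /aS].
have aiS' : {in S :\ i, forall j, cube_add a i j = false}.
  by move=> j /setD1P[ji /aS aj]; rewrite cube_addE (negbTE ji).
have dLU := subcube_halves_disjoint S ai.
rewrite (cardsD1 i S) iS add1n (subcube_split ai iS) /=.
have [fai_gt0|fai_le0] := ltP 0 (f (cube_add a i)).
  rewrite setIdE setIUl cardsU_disjoint -?setIdE; last first.
    by apply: disjointW dLU; apply/subsetP=> x; rewrite inE => /andP[].
  apply: leq_trans (leq_add (IH _ aS' fa_gt0) (IH _ aiS' fai_gt0)).
  by case: #|S :\ i| => [|k] //; rewrite expnS mul2n addnn.
have iSi : i \notin S :\ i by rewrite setD11.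
rewrite -(card_subcube aS').
apply: (card_le_pairing (h := fun x : cube n => cube_add x i)) dLU _ _ _.
- move=> x y /(subcube_coord iSi) xi /(subcube_coord iSi) yi.
  by apply: cube_add_inj; rewrite ?xi ?yi.
- by move=> x; apply: cube_add_subcube.
move=> x xL; have xi := subcube_coord iSi xL; rewrite ai in xi.
have fai_lt := le_lt_trans fai_le0 fa_gt0.
have := submodular_increment_neq (subcube_le aS' xL) ai xi fai_lt.
by apply: contraR => /norP[/negbNE/eqP -> /negbNE/eqP ->].
Qed.

End Submodular.

Theorem lemma6 (R : realFieldType) (n : nat) (f : cube n -> R) :
  submodular f -> 0 < f (cube0 n) ->
  (2 ^ n.-1 <= #|[set x : cube n | f x != 0%R]|)%N.
Proof.
move=> f_submod f0_gt0.
have cube0_free : {in [set: 'I_n], forall j, cube0 n j = false}.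
  by move=> j _; rewrite ffunE.
have := subcube_nonzeros f_submod cube0_free f0_gt0.
by rewrite subcubeT cardsT card_ord setIdE setTI.
Qed.
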